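(* Let $X_1,\dots,X_n\in\mathbb{R}$, $Y\in\mathbb{R}^n$ and $\lambda\ge 0$. The univariate LISO problem $$\min_{\theta\in\mathcal{M}}\ \tfrac12\|Y-\theta\|^2+\lambda\big(\max_i\theta_i-\min_i\theta_i\big)$$ has a unique solution $\hat\theta_\lambda$, and there exist thresholds $A_\lambda\le B_\lambda$ (with $A_\lambda,B_\lambda\in[-\infty,\infty]$) such that $\hat\theta_\lambda=\hat\theta^{>A_\lambda,<B_\lambda}$, i.e. $(\hat\theta_\lambda)_i=\min\{B_\lambda,\max\{A_\lambda,\hat\theta^{\mathrm{PAVA}}_i\}\}$ for all $i$.
   Context: $\mathcal{M}$ denotes the set of vectors $\theta\in\mathbb{R}^n$ that are monotone in $X$: $\theta_i\le\theta_j$ whenever $X_i<X_j$, and $\theta_i=\theta_j$ whenever $X_i=X_j$. The PAVA fit $\hat\theta^{\mathrm{PAVA}}$ is the unique minimiser of $\|Y-\theta\|^2$ over $\theta\in\mathcal{M}$. For $A\le B$, the Winsorized PAVA vector $\hat\theta^{>A,<B}$ is obtained by replacing entries of $\hat\theta^{\mathrm{PAVA}}$ below $A$ by $A$ and entries above $B$ by $B$. *)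

From Stdlib Require Import Reals List.
Import ListNotations.
Open Scope R_scope.

(* Vectors in R^n are represented as functions nat -> R, of which only the
   coordinates 0..n-1 are relevant. *)

Definition sumR (n : nat) (f : nat -> R) : R :=
  fold_right Rplus 0 (map f (seq 0 n)).

(* max_i theta_i and min_i theta_i over i < n (meaningful for n >= 1). *)
Definition maxv (n : nat) (theta : nat -> R) : R :=
  fold_right Rmax (theta 0%nat) (map theta (seq 0 n)).
Definition minv (n : nat) (theta : nat -> R) : R :=
  fold_right Rmin (theta 0%nat) (map theta (seq 0 n)).

Definition monotone_in (n : nat) (X theta : nat -> R) : Prop :=
  forall i j, (i < n)%nat -> (j < n)%nat ->
    (X i < X j -> theta i <= theta j) /\ (X i = X j -> theta i = theta j).

Definition sqnorm_diff (n : nat) (Y theta : nat -> R) : R :=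
  sumR n (fun i => (Y i - theta i) ^ 2).

Definition is_pava (n : nat) (X Y theta : nat -> R) : Prop :=
  monotone_in n X theta /\
  forall theta', monotone_in n X theta' ->
    sqnorm_diff n Y theta <= sqnorm_diff n Y theta'.

Definition liso_obj (n : nat) (lam : R) (Y theta : nat -> R) : R :=
  / 2 * sqnorm_diff n Y theta + lam * (maxv n theta - minv n theta).

Definition is_liso_sol (n : nat) (lam : R) (X Y theta : nat -> R) : Prop :=
  monotone_in n X theta /\
  forall theta', monotone_in n X theta' ->
    liso_obj n lam Y theta <= liso_obj n lam Y theta'.

(* Extended reals for thresholds: None on the lower side means -infinity,
   None on the upper side means +infinity. *)
Definition lower_clip (A : option R) (x : R) : R :=
  match A with None => x | Some a => Rmax a x end.
Definition upper_clip (B : option R) (x : R) : R :=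
  match B with None => x | Some b => Rmin b x end.

Definition thr_le (A B : option R) : Prop :=
  match A, B with Some a, Some b => a <= b | _, _ => True end.

Definition winsorize (A B : option R) (theta : nat -> R) : nat -> R :=
  fun i => upper_clip B (lower_clip A (theta i)).

(* The PAVA fit P is the projection of Y onto the convex cone M, so
   <Y - P, T - P> <= 0 for every T in M; for T = clip_[a,b](P) this is an
   equality, because both clip(P) and its reflection 2P - clip(P) are
   nondecreasing functions of P and hence lie in M.

   Choose a <= b so that the total amount s by which P falls below a equals the
   amount by which it exceeds b, with s = lam unless the two thresholds meet
   (a = b, s <= lam); such a, b exist by the intermediate value theorem.  For
   W = clip_[a,b](P) and any theta in M, the orthogonality relations give
   <Y - W, theta - W> <= <P - W, theta - W> <= s (a - min theta) + s (max theta - b),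
   and since the range of W is at most b - a, expanding the square yields
     LISO(theta) >= LISO(W) + 1/2 ||theta - W||^2.
   Hence W is the unique LISO solution. *)
From Stdlib Require Import Reals List Lra Lia Psatz FunctionalExtensionality.
Open Scope R_scope.

Lemma fold_right_Rplus_init (a : R) (l : list R) :
  fold_right Rplus a l = fold_right Rplus 0 l + a.
Proof. induction l as [|x l IH]; simpl; [lra | rewrite IH; lra]. Qed.

Lemma sumR_S (n : nat) (f : nat -> R) : sumR (S n) f = sumR n f + f n.
Proof.
  unfold sumR. rewrite seq_S, map_app, fold_right_app. simpl.
  rewrite fold_right_Rplus_init. lra.
Qed.

Lemma sumR_ext (n : nat) (f g : nat -> R) :
  (forall i, (i < n)%nat -> f i = g i) -> sumR n f = sumR n g.
Proof.
  induction n as [|n IH]; intros H; [reflexivity|].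
  rewrite !sumR_S, IH, H; auto.
Qed.

Lemma sumR_le (n : nat) (f g : nat -> R) :
  (forall i, (i < n)%nat -> f i <= g i) -> sumR n f <= sumR n g.
Proof.
  induction n as [|n IH]; intros H; [unfold sumR; simpl; lra|]. rewrite !sumR_S.
  assert (sumR n f <= sumR n g) by (apply IH; intros; apply H; lia).
  specialize (H n ltac:(lia)). lra.
Qed.

Lemma sumR_plus (n : nat) (f g : nat -> R) :
  sumR n (fun i => f i + g i) = sumR n f + sumR n g.
Proof. induction n as [|n IH]; [unfold sumR; simpl; lra|]. rewrite !sumR_S, IH. lra. Qed.

Lemma sumR_minus (n : nat) (f g : nat -> R) :
  sumR n (fun i => f i - g i) = sumR n f - sumR n g.
Proof. induction n as [|n IH]; [unfold sumR; simpl; lra|]. rewrite !sumR_S, IH. lra. Qed.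

Lemma sumR_scal (n : nat) (c : R) (f : nat -> R) :
  sumR n (fun i => c * f i) = c * sumR n f.
Proof. induction n as [|n IH]; [unfold sumR; simpl; lra|]. rewrite !sumR_S, IH. lra. Qed.

Lemma sumR_const (n : nat) (c : R) : sumR n (fun _ => c) = INR n * c.
Proof.
  induction n as [|n IH]; [unfold sumR; simpl; lra|]. rewrite sumR_S, IH, S_INR. lra.
Qed.

Lemma sumR_nonneg (n : nat) (f : nat -> R) :
  (forall i, (i < n)%nat -> 0 <= f i) -> 0 <= sumR n f.
Proof.
  intros H. replace 0 with (sumR n (fun _ => 0)) by (rewrite sumR_const; lra).
  now apply sumR_le.
Qed.

Lemma sumR_ge_term (n : nat) (f : nat -> R) (i : nat) :
  (forall j, (j < n)%nat -> 0 <= f j) -> (i < n)%nat -> f i <= sumR n f.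
Proof.
  induction n as [|n IH]; intros H Hi; [lia|]. rewrite sumR_S.
  assert (0 <= sumR n f) by (apply sumR_nonneg; intros; apply H; lia).
  assert (0 <= f n) by (apply H; lia).
  destruct (Nat.eq_dec i n) as [->|Hne]; [lra|].
  assert (f i <= sumR n f) by (apply IH; [intros; apply H | ]; lia).
  lra.
Qed.

Lemma sumR_continuity (n : nat) (F : R -> nat -> R) :
  (forall i, continuity (fun t => F t i)) -> continuity (fun t => sumR n (F t)).
Proof.
  intros H. induction n as [|n IH].
  - apply continuity_const. intros x y; reflexivity.
  - replace (fun t => sumR (S n) (F t)) with (fun t => sumR n (F t) + F t n).
    + exact (continuity_plus _ _ IH (H n)).
    + apply functional_extensionality; intros t. now rewrite sumR_S.
Qed.

Lemma sqnorm_diff_expand (n : nat) (Y W theta : nat -> R) :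
  sqnorm_diff n Y theta =
  sqnorm_diff n Y W - 2 * sumR n (fun i => (Y i - W i) * (theta i - W i))
  + sumR n (fun i => (theta i - W i) ^ 2).
Proof.
  unfold sqnorm_diff. rewrite <- sumR_scal, <- sumR_minus, <- sumR_plus.
  apply sumR_ext; intros; ring.
Qed.

Lemma fold_Rmax_ge (d : R) (l : list R) (x : R) : In x l -> x <= fold_right Rmax d l.
Proof.
  induction l as [|y l IH]; simpl; [tauto|]. intros [<-|H]; [apply Rmax_l|].
  eapply Rle_trans; [apply IH, H | apply Rmax_r].
Qed.

Lemma fold_Rmax_ge_init (d : R) (l : list R) : d <= fold_right Rmax d l.
Proof.
  induction l as [|y l IH]; simpl; [lra|]. eapply Rle_trans; [apply IH | apply Rmax_r].
Qed.

Lemma fold_Rmax_lub (d b : R) (l : list R) :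
  d <= b -> (forall x, In x l -> x <= b) -> fold_right Rmax d l <= b.
Proof. induction l; simpl; intros; auto. apply Rmax_lub; auto. Qed.

Lemma fold_Rmin_le (d : R) (l : list R) (x : R) : In x l -> fold_right Rmin d l <= x.
Proof.
  induction l as [|y l IH]; simpl; [tauto|]. intros [<-|H]; [apply Rmin_l|].
  eapply Rle_trans; [apply Rmin_r | apply IH, H].
Qed.

Lemma fold_Rmin_le_init (d : R) (l : list R) : fold_right Rmin d l <= d.
Proof.
  induction l as [|y l IH]; simpl; [lra|]. eapply Rle_trans; [apply Rmin_r | apply IH].
Qed.

Lemma fold_Rmin_glb (d b : R) (l : list R) :
  b <= d -> (forall x, In x l -> b <= x) -> b <= fold_right Rmin d l.
Proof. induction l; simpl; intros; auto. apply Rmin_glb; auto. Qed.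

Lemma maxv_ge (n : nat) (f : nat -> R) (i : nat) : (i < n)%nat -> f i <= maxv n f.
Proof. intros; apply fold_Rmax_ge, in_map, in_seq; lia. Qed.

Lemma minv_le (n : nat) (f : nat -> R) (i : nat) : (i < n)%nat -> minv n f <= f i.
Proof. intros; apply fold_Rmin_le, in_map, in_seq; lia. Qed.

Lemma minv_le_maxv (n : nat) (f : nat -> R) : minv n f <= maxv n f.
Proof. eapply Rle_trans; [apply fold_Rmin_le_init | apply fold_Rmax_ge_init]. Qed.

Lemma maxv_le (n : nat) (f : nat -> R) (b : R) : (forall i, f i <= b) -> maxv n f <= b.
Proof.
  intros H; apply fold_Rmax_lub; auto.
  intros x Hx; apply in_map_iff in Hx as [j [<- _]]; auto.
Qed.

Lemma minv_ge (n : nat) (f : nat -> R) (b : R) : (forall i, b <= f i) -> b <= minv n f.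
Proof.
  intros H; apply fold_Rmin_glb; auto.
  intros x Hx; apply in_map_iff in Hx as [j [<- _]]; auto.
Qed.

Lemma monotone_in_map (n : nat) (X P : nat -> R) (f : R -> R) :
  monotone_in n X P -> (forall x y, x <= y -> f x <= f y) ->
  monotone_in n X (fun i => f (P i)).
Proof.
  intros HP Hf i j Hi Hj. destruct (HP i j Hi Hj) as [Hlt Heq]. split.
  - intros; apply Hf; auto.
  - intros E; now rewrite (Heq E).
Qed.

Lemma monotone_in_segment (n : nat) (X P T : nat -> R) (t : R) :
  monotone_in n X P -> monotone_in n X T -> 0 <= t <= 1 ->
  monotone_in n X (fun i => P i + t * (T i - P i)).
Proof.
  intros HP HT Ht i j Hi Hj.
  destruct (HP i j Hi Hj) as [HPlt HPeq], (HT i j Hi Hj) as [HTlt HTeq]. split.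
  - intros L. specialize (HPlt L); specialize (HTlt L). nra.
  - intros E. now rewrite (HPeq E), (HTeq E).
Qed.

Lemma nonpos_of_first_order (I D : R) :
  (forall t, 0 < t <= 1 -> 2 * I <= t * D) -> I <= 0.
Proof.
  intros H. destruct (Rle_dec I 0) as [|HI]; [assumption|]. exfalso.
  destruct (Rle_dec D 0) as [HD|HD].
  - specialize (H 1 ltac:(lra)). lra.
  - set (t := Rmin 1 (I / D)).
    assert (Ht : 0 < t <= 1).
    { split; [apply Rmin_glb_lt; [lra | apply Rdiv_lt_0_compat; lra] | apply Rmin_l]. }
    assert (t * D <= I).
    { replace I with (I / D * D) by (field; lra).
      apply Rmult_le_compat_r; [lra | apply Rmin_r]. }
    specialize (H t Ht). lra.
Qed.

Lemma pava_variational (n : nat) (X Y P T : nat -> R) :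
  is_pava n X Y P -> monotone_in n X T ->
  sumR n (fun i => (Y i - P i) * (T i - P i)) <= 0.
Proof.
  intros [HPm HPopt] HT. apply (nonpos_of_first_order _ (sumR n (fun i => (T i - P i) ^ 2))).
  intros t Ht.
  specialize (HPopt _ (monotone_in_segment n X P T t HPm HT ltac:(lra))).
  rewrite (sqnorm_diff_expand n Y P (fun i => P i + t * (T i - P i))) in HPopt.
  replace (sumR n (fun i => (Y i - P i) * (P i + t * (T i - P i) - P i)))
    with (t * sumR n (fun i => (Y i - P i) * (T i - P i))) in HPopt
    by (rewrite <- sumR_scal; apply sumR_ext; intros; ring).
  replace (sumR n (fun i => (P i + t * (T i - P i) - P i) ^ 2))
    with (t * (t * sumR n (fun i => (T i - P i) ^ 2))) in HPopt
    by (rewrite <- !sumR_scal; apply sumR_ext; intros; ring).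
  apply (Rmult_le_reg_l t); nra.
Qed.

Definition clip (a b x : R) : R := Rmin b (Rmax a x).

Lemma clip_le_compat (a b x y : R) : x <= y -> clip a b x <= clip a b y.
Proof. unfold clip, Rmin, Rmax; intros; repeat destruct Rle_dec; lra. Qed.

Lemma clip_increment_le (a b x y : R) :
  a <= b -> x <= y -> clip a b y - clip a b x <= y - x.
Proof. unfold clip, Rmin, Rmax; intros; repeat destruct Rle_dec; lra. Qed.

Lemma clip_bounds (a b x : R) : a <= b -> a <= clip a b x <= b.
Proof. unfold clip, Rmin, Rmax; intros; repeat destruct Rle_dec; lra. Qed.

Lemma pava_clip_orthogonal (n : nat) (X Y P : nat -> R) (a b : R) :
  is_pava n X Y P -> a <= b ->
  sumR n (fun i => (Y i - P i) * (clip a b (P i) - P i)) = 0.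
Proof.
  intros HP Hab.
  assert (Hclip := pava_variational n X Y P _ HP
                     (monotone_in_map n X P _ (proj1 HP) (clip_le_compat a b))).
  assert (Hrefl : monotone_in n X (fun i => 2 * P i - clip a b (P i))).
  { apply (monotone_in_map n X P (fun x => 2 * x - clip a b x) (proj1 HP)).
    intros x y Hxy. pose proof (clip_increment_le a b x y Hab Hxy). lra. }
  pose proof (pava_variational n X Y P _ HP Hrefl) as Hreflected.
  cbv beta in Hclip, Hreflected.
  replace (sumR n (fun i => (Y i - P i) * (2 * P i - clip a b (P i) - P i)))
    with (-1 * sumR n (fun i => (Y i - P i) * (clip a b (P i) - P i))) in Hreflected
    by (rewrite <- sumR_scal; apply sumR_ext; intros; ring).
  lra.
Qed.

Definition mass_below (n : nat) (P : nat -> R) (a : R) : R :=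
  sumR n (fun i => Rmax 0 (a - P i)).

Definition mass_above (n : nat) (P : nat -> R) (b : R) : R :=
  sumR n (fun i => Rmax 0 (P i - b)).

Lemma clip_residual_le (a b p x m M : R) : a <= b -> m <= x <= M ->
  (p - clip a b p) * (x - clip a b p)
  <= Rmax 0 (a - p) * (a - m) + Rmax 0 (p - b) * (M - b).
Proof.
  intros Hab Hx. unfold clip.
  destruct (Rle_dec p a).
  - rewrite (Rmax_left a p), (Rmin_right b a), (Rmax_right 0 (a - p)),
      (Rmax_left 0 (p - b)) by lra. nra.
  - rewrite (Rmax_right a p), (Rmax_left 0 (a - p)) by lra.
    destruct (Rle_dec p b).
    + rewrite (Rmin_right b p), (Rmax_left 0 (p - b)) by lra. nra.
    + rewrite (Rmin_left b p), (Rmax_right 0 (p - b)) by lra. nra.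
Qed.

Lemma clip_residual_sum_le (n : nat) (P theta : nat -> R) (a b : R) : a <= b ->
  sumR n (fun i => (P i - clip a b (P i)) * (theta i - clip a b (P i)))
  <= (a - minv n theta) * mass_below n P a + (maxv n theta - b) * mass_above n P b.
Proof.
  intros Hab. unfold mass_below, mass_above.
  rewrite <- !sumR_scal, <- sumR_plus.
  apply sumR_le. intros i Hi. rewrite (Rmult_comm (a - _)), (Rmult_comm (_ - b)).
  apply clip_residual_le; auto. split; [apply minv_le | apply maxv_ge]; auto.
Qed.

Definition balanced_thresholds (n : nat) (P : nat -> R) (lam a b : R) : Prop :=
  a <= b /\ mass_below n P a = mass_above n P b /\ mass_below n P a <= lam /\
  (mass_below n P a = lam \/ a = b).

Lemma liso_obj_clip_growth (n : nat) (X Y P theta : nat -> R) (lam a b : R) :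
  is_pava n X Y P -> 0 <= lam -> monotone_in n X theta ->
  balanced_thresholds n P lam a b ->
  liso_obj n lam Y (fun i => clip a b (P i))
  + / 2 * sumR n (fun i => (theta i - clip a b (P i)) ^ 2)
  <= liso_obj n lam Y theta.
Proof.
  intros HP Hlam Htheta [Hab [Hbal [Hs Hcase]]].
  set (W := fun i => clip a b (P i)).
  set (s := mass_below n P a) in *.
  set (m := minv n theta). set (M := maxv n theta).
  assert (Hinner : sumR n (fun i => (Y i - W i) * (theta i - W i))
                   <= s * (M - m) - s * (b - a)).
  { replace (sumR n (fun i => (Y i - W i) * (theta i - W i)))
      with (sumR n (fun i => (Y i - P i) * (theta i - P i))
            - sumR n (fun i => (Y i - P i) * (clip a b (P i) - P i))
            + sumR n (fun i => (P i - clip a b (P i)) * (theta i - clip a b (P i))))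
      by (rewrite <- sumR_minus, <- sumR_plus; apply sumR_ext; intros; unfold W; ring).
    rewrite (pava_clip_orthogonal n X Y P a b HP Hab).
    pose proof (pava_variational n X Y P theta HP Htheta) as Hvar.
    pose proof (clip_residual_sum_le n P theta a b Hab) as Hres.
    fold s m M in Hres. rewrite <- Hbal in Hres. lra. }
  assert (HrangeW : maxv n W - minv n W <= b - a).
  { assert (maxv n W <= b) by (apply maxv_le; intros; apply clip_bounds; auto).
    assert (a <= minv n W) by (apply minv_ge; intros; apply clip_bounds; auto). lra. }
  assert (Hrange : 0 <= M - m) by (pose proof (minv_le_maxv n theta); unfold m, M; lra).
  assert (HpenW : lam * (maxv n W - minv n W) <= lam * (b - a))
    by (apply Rmult_le_compat_l; lra).
  assert (Hpen : s * (M - m) <= lam * (M - m)) by (apply Rmult_le_compat_r; lra).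
  change (sumR n (fun i => (theta i - clip a b (P i)) ^ 2))
    with (sumR n (fun i => (theta i - W i) ^ 2)).
  unfold liso_obj. rewrite (sqnorm_diff_expand n Y W theta). fold m M.
  destruct Hcase as [Hs_lam | <-].
  - rewrite Hs_lam in Hinner. lra.
  - rewrite Rminus_diag, Rmult_0_r in Hinner, HpenW. lra.
Qed.

Lemma lipschitz1_continuity (f : R -> R) :
  (forall x y, Rabs (f x - f y) <= Rabs (x - y)) -> continuity f.
Proof.
  intros H x eps Heps. exists eps. split; [lra|].
  intros y [_ Hy]. simpl in *. unfold R_dist in *. specialize (H y x). lra.
Qed.

Lemma mass_below_continuous (n : nat) (P : nat -> R) : continuity (mass_below n P).
Proof.
  apply (sumR_continuity n (fun t i => Rmax 0 (t - P i))). intros i.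
  apply lipschitz1_continuity. intros x y.
  unfold Rmax, Rabs; repeat destruct Rle_dec; repeat destruct Rcase_abs; lra.
Qed.

Lemma mass_above_continuous (n : nat) (P : nat -> R) : continuity (mass_above n P).
Proof.
  apply (sumR_continuity n (fun t i => Rmax 0 (P i - t))). intros i.
  apply lipschitz1_continuity. intros x y.
  unfold Rmax, Rabs; repeat destruct Rle_dec; repeat destruct Rcase_abs; lra.
Qed.

Lemma mass_below_sub_mass_above (n : nat) (P : nat -> R) (c : R) :
  mass_below n P c - mass_above n P c = INR n * c - sumR n P.
Proof.
  unfold mass_below, mass_above. rewrite <- sumR_const, <- !sumR_minus.
  apply sumR_ext; intros. unfold Rmax; repeat destruct Rle_dec; lra.
Qed.

Lemma balance_point_exists (n : nat) (P : nat -> R) :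
  exists c, mass_below n P c = mass_above n P c.
Proof.
  destruct n as [|n]; [exists 0; reflexivity|].
  exists (sumR (S n) P / INR (S n)).
  pose proof (mass_below_sub_mass_above (S n) P (sumR (S n) P / INR (S n))) as Hdiff.
  replace (INR (S n) * (sumR (S n) P / INR (S n))) with (sumR (S n) P) in Hdiff
    by (field; apply not_0_INR; lia).
  lra.
Qed.

Lemma mass_below_eq0 (n : nat) (P : nat -> R) (a : R) :
  a <= minv n P -> mass_below n P a = 0.
Proof.
  intros Ha. unfold mass_below. transitivity (sumR n (fun _ => 0)); [| rewrite sumR_const; ring].
  apply sumR_ext; intros i Hi. pose proof (minv_le n P i Hi). apply Rmax_left. lra.
Qed.

Lemma mass_above_eq0 (n : nat) (P : nat -> R) (b : R) :
  maxv n P <= b -> mass_above n P b = 0.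
Proof.
  intros Hb. unfold mass_above. transitivity (sumR n (fun _ => 0)); [| rewrite sumR_const; ring].
  apply sumR_ext; intros i Hi. pose proof (maxv_ge n P i Hi). apply Rmax_left. lra.
Qed.

(* Start from a balance point c; if the mass there exceeds lam, move a down and b
   up until each mass has decreased to exactly lam. *)
Lemma balanced_thresholds_exist (n : nat) (P : nat -> R) (lam : R) :
  0 <= lam -> exists a b, balanced_thresholds n P lam a b.
Proof.
  intros Hlam. destruct (balance_point_exists n P) as [c Hc].
  destruct (Rle_dec (mass_below n P c) lam) as [Hle|Hgt].
  { exists c, c. repeat split; auto; lra. }
  assert (Hx : mass_below n P (Rmin (minv n P) c) = 0)
    by (apply mass_below_eq0, Rmin_l).
  assert (Hy : mass_above n P (Rmax (maxv n P) c) = 0)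
    by (apply mass_above_eq0, Rmax_l).
  destruct (IVT_cor (fun t => mass_below n P t - lam) (Rmin (minv n P) c) c)
    as [a [[Ha1 Ha2] Ha]].
  { apply continuity_minus; [apply mass_below_continuous | apply continuity_const].
    intros u v; reflexivity. }
  { apply Rmin_r. }
  { rewrite Hx. nra. }
  destruct (IVT_cor (fun t => mass_above n P t - lam) c (Rmax (maxv n P) c))
    as [b [[Hb1 Hb2] Hb]].
  { apply continuity_minus; [apply mass_above_continuous | apply continuity_const].
    intros u v; reflexivity. }
  { apply Rmax_r. }
  { rewrite Hy, <- Hc. nra. }
  exists a, b. repeat split; lra.
Qed.

Theorem theorem1 (n : nat) (X Y : nat -> R) (lam : R) (thetaP : nat -> R)
  (Hlam : 0 <= lam) (HP : is_pava n X Y thetaP) :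
  exists theta : nat -> R,
    is_liso_sol n lam X Y theta /\
    (forall theta', is_liso_sol n lam X Y theta' ->
       forall i, (i < n)%nat -> theta' i = theta i) /\
    exists A B : option R, thr_le A B /\
      forall i, (i < n)%nat -> theta i = winsorize A B thetaP i.
Proof.
  destruct (balanced_thresholds_exist n thetaP lam Hlam) as [a [b Hthr]].
  set (W := fun i => clip a b (thetaP i)).
  assert (Hgrowth : forall theta, monotone_in n X theta ->
    liso_obj n lam Y W + / 2 * sumR n (fun i => (theta i - W i) ^ 2)
    <= liso_obj n lam Y theta)
    by (intros; apply (liso_obj_clip_growth n X); auto).
  assert (Hsq : forall theta, 0 <= sumR n (fun i => (theta i - W i) ^ 2))
    by (intros; apply sumR_nonneg; intros; apply pow2_ge_0).
  assert (HW : monotone_in n X W)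
    by apply (monotone_in_map n X thetaP _ (proj1 HP) (clip_le_compat a b)).
  exists W. split; [|split].
  - split; [exact HW|]. intros theta Htheta.
    specialize (Hgrowth _ Htheta); specialize (Hsq theta). lra.
  - intros theta [Htheta Hopt] i Hi.
    specialize (Hgrowth _ Htheta). specialize (Hopt _ HW).
    assert (Hterm : (theta i - W i) ^ 2 <= sumR n (fun i => (theta i - W i) ^ 2))
      by (apply (sumR_ge_term n (fun i => (theta i - W i) ^ 2)); auto; intros; apply pow2_ge_0).
    nra.
  - exists (Some a), (Some b). split; [exact (proj1 Hthr) | reflexivity].
Qed.
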